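(* If $\varphi\in\mathrm{maxHML}$ (resp. $\varphi\in\mathrm{minHML}$) is closed, then there is some $\psi\in\mathrm{sHML}$ (resp. $\psi\in\mathrm{cHML}$) such that $[\![\psi]\!]_L=[\![\varphi]\!]_L$.
   Context: Fix a finite set $\mathrm{Act}$ of actions. recHML formulae: $\varphi::=\mathrm{tt}\mid\mathrm{ff}\mid\varphi\vee\varphi\mid\varphi\wedge\varphi\mid\langle A\rangle\varphi\mid[A]\varphi\mid\min X.\varphi\mid\max X.\varphi\mid X$ ($A\subseteq\mathrm{Act}$), guarded. Fragments: $\mathrm{maxHML}$: $\varphi::=\mathrm{tt}\mid\mathrm{ff}\mid[A]\varphi\mid\langle A\rangle\varphi\mid\varphi\vee\varphi\mid\varphi\wedge\varphi\mid\max X.\varphi\mid X$; $\mathrm{minHML}$: $\varphi::=\mathrm{tt}\mid\mathrm{ff}\mid[A]\varphi\mid\langle A\rangle\varphi\mid\varphi\vee\varphi\mid\varphi\wedge\varphi\mid\min X.\varphi\mid X$; $\mathrm{sHML}$: $\varphi::=\mathrm{tt}\mid\mathrm{ff}\mid[A]\varphi\mid\varphi\wedge\varphi\mid\max X.\varphi\mid X$; $\mathrm{cHML}$: $\varphi::=\mathrm{tt}\mid\mathrm{ff}\mid\langle A\rangle\varphi\mid\varphi\vee\varphi\mid\min X.\varphi\mid X$. Linear-time semantics over infinite traces $\mathrm{Trc}=\mathrm{Act}^\omega$: $[\![\mathrm{tt}]\!]_L=\mathrm{Trc}$, $[\![\mathrm{ff}]\!]_L=\emptyset$, $\vee,\wedge$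 union/intersection, $[\![\langle A\rangle\varphi,\sigma]\!]_L=\{at\mid a\in A,t\in[\![\varphi,\sigma]\!]_L\}$, $[\![[A]\varphi,\sigma]\!]_L=\{t\mid\forall a\in A,\forall t'.\ t=at'\Rightarrow t'\in[\![\varphi,\sigma]\!]_L\}$, $[\![\min X.\varphi,\sigma]\!]_L=\bigcap\{S\mid[\![\varphi,\sigma[X\mapsto S]]\!]_L\subseteq S\}$, $[\![\max X.\varphi,\sigma]\!]_L=\bigcup\{S\mid S\subseteq[\![\varphi,\sigma[X\mapsto S]]\!]_L\}$, $[\![X,\sigma]\!]_L=\sigma(X)$. *)

From mathcomp Require Import all_boot.
Set Implicit Arguments. Unset Strict Implicit. Unset Printing Implicit Defensive.

Inductive form (Act : finType) : Type :=
| Ftt | Fff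
| For  of form Act & form Act
| Fand of form Act & form Act
| Fdia of {set Act} & form Act
| Fbox of {set Act} & form Act
| Fmin of nat & form Act
| Fmax of nat & form Act
| Fvar of nat.
Arguments Ftt {Act}. Arguments Fff {Act}. Arguments Fvar {Act}.

Definition trace (Act : finType) := nat -> Act.
Definition ttail (Act : finType) (t : trace Act) : trace Act := fun n => t n.+1.
Definition tcons (Act : finType) (a : Act) (t : trace Act) : trace Act :=
  fun n => if n is n'.+1 then t n' else a.

Definition tset (Act : finType) := trace Act -> Prop.
Definition env (Act : finType) := nat -> tset Act.
Definition upd (Act : finType) (s : env Act) (X : nat) (S : tset Act) : env Act :=
  fun Y => if Y == X then S else s Y.

Fixpoint sem (Act : finType) (f : form Act) (s : env Act) : tset Act :=
  match f with
  | Ftt => fun _ => True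
  | Fff => fun _ => False
  | For f1 f2 => fun t => sem f1 s t \/ sem f2 s t
  | Fand f1 f2 => fun t => sem f1 s t /\ sem f2 s t
  | Fdia A f1 => fun t => exists a t', a \in A /\ sem f1 s t' /\ t = tcons a t'
  | Fbox A f1 => fun t => forall a t', a \in A -> t = tcons a t' -> sem f1 s t'
  | Fmin X f1 => fun t =>
      forall S : tset Act, (forall u, sem f1 (upd s X S) u -> S u) -> S t
  | Fmax X f1 => fun t =>
      exists S : tset Act, (forall u, S u -> sem f1 (upd s X S) u) /\ S t
  | Fvar X => s X
  end.

Definition env0 (Act : finType) : env Act := fun _ _ => False.
Definition semL (Act : finType) (f : form Act) : tset Act := sem f (@env0 Act).

Fixpoint closed_in (Act : finType) (bnd : seq nat) (f : form Act) : bool :=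
  match f with
  | Ftt | Fff => true
  | For f1 f2 | Fand f1 f2 => closed_in bnd f1 && closed_in bnd f2
  | Fdia _ f1 | Fbox _ f1 => closed_in bnd f1
  | Fmin X f1 | Fmax X f1 => closed_in (X :: bnd) f1
  | Fvar X => X \in bnd
  end.
Definition closedF (Act : finType) (f : form Act) := closed_in [::] f.

(* guardedness: every occurrence of a variable lies under a modality
   within the scope of its binder; [ung] = variables currently unguarded *)
Fixpoint guarded_in (Act : finType) (ung : seq nat) (f : form Act) : bool :=
  match f with
  | Ftt | Fff => true
  | For f1 f2 | Fand f1 f2 => guarded_in ung f1 && guarded_in ung f2
  | Fdia _ f1 | Fbox _ f1 => guarded_in [::] f1
  | Fmin X f1 | Fmax X f1 => guarded_in (X :: ung) f1
  | Fvar X => X \notin ung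
  end.
Definition guarded (Act : finType) (f : form Act) := guarded_in [::] f.

Fixpoint maxHML (Act : finType) (f : form Act) : bool :=
  match f with
  | Ftt | Fff | Fvar _ => true
  | For f1 f2 | Fand f1 f2 => maxHML f1 && maxHML f2
  | Fdia _ f1 | Fbox _ f1 | Fmax _ f1 => maxHML f1
  | Fmin _ _ => false
  end.
Fixpoint minHML (Act : finType) (f : form Act) : bool :=
  match f with
  | Ftt | Fff | Fvar _ => true
  | For f1 f2 | Fand f1 f2 => minHML f1 && minHML f2
  | Fdia _ f1 | Fbox _ f1 | Fmin _ f1 => minHML f1
  | Fmax _ _ => false
  end.
Fixpoint sHML (Act : finType) (f : form Act) : bool :=
  match f with
  | Ftt | Fff | Fvar _ => true
  | Fand f1 f2 => sHML f1 && sHML f2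
  | Fbox _ f1 | Fmax _ f1 => sHML f1
  | _ => false
  end.
Fixpoint cHML (Act : finType) (f : form Act) : bool :=
  match f with
  | Ftt | Fff | Fvar _ => true
  | For f1 f2 => cHML f1 && cHML f2
  | Fdia _ f1 | Fmin _ f1 => cHML f1
  | _ => false
  end.

Definition recHML (Act : finType) (f : form Act) := guarded f.

From Stdlib Require Import Classical ClassicalEpsilon FunctionalExtensionality
  PropExtensionality List.
From mathcomp Require Import all_boot.
Set Implicit Arguments. Unset Strict Implicit. Unset Printing Implicit Defensive.

(* - Semantics: monotonicity, fixpoint unfolding, and irrelevance of the
     environment for bound variables.
   - Safety: the meaning of a maxHML formula is closed under the safety
     closure [Safe] (t belongs to it as soon as every finite prefix of t
     extends to a trace that does); the box-only fragment cannot express more.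
   - Derivatives: the meanings [fl phi] of the subformulae of a guarded
     formula form a finite family U whose one-letter derivatives are positive
     Boolean combinations of members of U.
   - Automaton: a trace has a type (the members of U it satisfies); sets of
     types are the states of a finite deterministic automaton recognising
     Boolean combinations of U, phi being one of them.  Unfolding it from
     phi, with a maximal fixpoint variable per state, yields an sHML formula
     whose models are the traces along which only non-empty states are
     visited, i.e. the safety closure of phi, i.e. phi itself.
   - Duality: [neg] swaps min/max, tt/ff, and/or, box/diamond and denotes the
     complement, which transfers the result from maxHML to minHML. *)

Section Semantics.
Variable Act : finType.
Local Notation form := (form Act).
Local Notation tset := (tset Act).
Local Notation env := (env Act).
Local Notation trace := (trace Act).

Lemma tcons_eta (t : trace) : tcons (t 0) (ttail t) = t.
Proof. by apply: functional_extensionality => -[]. Qed.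

Lemma tcons_inj (a b : Act) (t t' : trace) :
  tcons a t = tcons b t' -> a = b /\ t = t'.
Proof.
move=> E; split; first exact: (f_equal (fun u => u 0) E).
by apply: functional_extensionality => n; exact: (f_equal (fun u => u n.+1) E).
Qed.

Definition esub (s1 s2 : env) := forall X t, s1 X t -> s2 X t.

Lemma esub_upd (s1 s2 : env) X S : esub s1 s2 -> esub (upd s1 X S) (upd s2 X S).
Proof. by move=> H Y v; rewrite /upd; case: (Y == X) => //; apply: H. Qed.

(* All formulae are monotone in their environment (there is no negation). *)
Lemma sem_mono (f : form) s1 s2 : esub s1 s2 -> forall t, sem f s1 t -> sem f s2 t.
Proof.
elim: f s1 s2 => //= [f1 IH1 f2 IH2|f1 IH1 f2 IH2|A f1 IH|A f1 IH|X f1 IH|X f1 IH|X]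
  s1 s2 H t.
- by case=> ?; [left; apply: IH1 H _ _|right; apply: IH2 H _ _].
- by case=> ??; split; [apply: IH1 H _ _|apply: IH2 H _ _].
- case=> a [t' [Ha [H1 ->]]]; exists a, t'; split=> //; split=> //.
  exact: IH H _ _.
- by move=> H1 a t' Ha Et; apply: IH H _ (H1 a t' Ha Et).
- move=> H1 S HS; apply: H1 => u Hu; apply: HS.
  by apply: IH Hu; apply: esub_upd.
- case=> S [HS St]; exists S; split=> // u Su.
  by apply: IH (HS u Su); apply: esub_upd.
- exact: H.
Qed.

Lemma max_unfold X (f : form) s t :
  sem (Fmax X f) s t <-> sem f (upd s X (sem (Fmax X f) s)) t.
Proof.
have post : forall u, sem (Fmax X f) s u -> sem f (upd s X (sem (Fmax X f) s)) u.
  move=> u [S [HS Su]]; apply: sem_mono (HS _ Su) => Y v.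
  by rewrite /upd; case: (Y == X) => // Sv; exists S.
split; first exact: post.
move=> H; exists (sem f (upd s X (sem (Fmax X f) s))); split=> // u Hu.
by apply: sem_mono Hu => Y v; rewrite /upd; case: (Y == X) => //; apply: post.
Qed.

Lemma min_unfold X (f : form) s t :
  sem (Fmin X f) s t <-> sem f (upd s X (sem (Fmin X f) s)) t.
Proof.
have pre : forall u, sem f (upd s X (sem (Fmin X f) s)) u -> sem (Fmin X f) s u.
  move=> u Hu S HS; apply: (HS); apply: sem_mono Hu => Y v.
  by rewrite /upd; case: (Y == X) => // Mv; exact: Mv HS.
split; last exact: pre.
apply; move=> u Hu; apply: sem_mono Hu => Y v.
by rewrite /upd; case: (Y == X) => //; apply: pre.
Qed.

Lemma sem_closed (f : form) bnd (s1 s2 : env) : closed_in bnd f ->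
  (forall X, X \in bnd -> forall t, s1 X t <-> s2 X t) ->
  forall t, sem f s1 t <-> sem f s2 t.
Proof.
elim: f bnd s1 s2 => //= [f1 IH1 f2 IH2|f1 IH1 f2 IH2|A f1 IH|A f1 IH|X f1 IH|X f1 IH|X]
  bnd s1 s2.
- by move=> /andP[c1 c2] H t; rewrite (IH1 _ _ _ c1 H) (IH2 _ _ _ c2 H).
- by move=> /andP[c1 c2] H t; rewrite (IH1 _ _ _ c1 H) (IH2 _ _ _ c2 H).
- move=> c H t; split=> -[b [t' [Hb [H1 E]]]]; exists b, t';
    by split=> //; split=> //; apply/(IH _ _ _ c H).
- by move=> c H t; split=> H1 b t' Hb E; apply/(IH _ _ _ c H); apply: H1 Hb E.
- move=> c H t.
  have E S u : sem f1 (upd s1 X S) u <-> sem f1 (upd s2 X S) u.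
    apply: (IH (X :: bnd)) => // Y; rewrite in_cons /upd.
    by case: (Y == X) => //= HY v; apply: H.
  by split=> H1 S HS; apply: H1 => u Hu; apply: HS; apply/E.
- move=> c H t.
  have E S u : sem f1 (upd s1 X S) u <-> sem f1 (upd s2 X S) u.
    apply: (IH (X :: bnd)) => // Y; rewrite in_cons /upd.
    by case: (Y == X) => //= HY v; apply: H.
  by split=> -[S [HS St]]; exists S; split=> // u Su; apply/E; apply: HS.
- by move=> c H t; apply: H.
Qed.

End Semantics.

Section Safety.
Variable Act : finType.
Local Notation form := (form Act).
Local Notation tset := (tset Act).
Local Notation env := (env Act).

Definition Safe (R : tset) : tset :=
  fun t => forall n, exists t', (forall i, i < n -> t' i = t i) /\ R t'.

Lemma Safe_mono (R1 R2 : tset) :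
  (forall t, R1 t -> R2 t) -> forall t, Safe R1 t -> Safe R2 t.
Proof. by move=> H t HS n; have [t' [A B]] := HS n; exists t'; split=> //; apply: H. Qed.

Lemma Safe_empty t : ~ Safe (fun _ => False) t.
Proof. by move=> /(_ 0) [t' []]. Qed.

(* Safety closure commutes with binary unions (classically, by taking the
   longer of two witnessing prefixes). *)
Lemma Safe_or (R1 R2 : tset) t :
  Safe (fun u => R1 u \/ R2 u) t -> Safe R1 t \/ Safe R2 t.
Proof.
move=> H; apply: NNPP => Hn.
have [n1 Hn1] : exists n, ~ (exists t', (forall i, i < n -> t' i = t i) /\ R1 t').
  by apply: not_all_ex_not => K; apply: Hn; left.
have [n2 Hn2] : exists n, ~ (exists t', (forall i, i < n -> t' i = t i) /\ R2 t').
  by apply: not_all_ex_not => K; apply: Hn; right.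
have [t' [Ag [R1t|R2t]]] := H (maxn n1 n2).
- by apply: Hn1; exists t'; split=> // i Hi; apply: Ag; rewrite leq_max Hi.
- by apply: Hn2; exists t'; split=> // i Hi; apply: Ag; rewrite leq_max Hi orbT.
Qed.

Lemma Safe_dia (R : tset) (A : {set Act}) t :
  Safe (fun u => exists b u', b \in A /\ R u' /\ u = tcons b u') t ->
  t 0 \in A /\ Safe R (ttail t).
Proof.
move=> H; split.
  by have [t' [Ag [b [u' [Hb [_ E]]]]]] := H 1; rewrite -Ag // E.
move=> n; have [t' [Ag [b [u' [Hb [Ru E]]]]]] := H n.+1.
by exists u'; split=> // i Hi; rewrite /ttail -Ag // E.
Qed.

Lemma Safe_box (R : tset) (A : {set Act}) t :
  Safe (fun u => forall b u', b \in A -> u = tcons b u' -> R u') t ->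
  t 0 \in A -> Safe R (ttail t).
Proof.
move=> H HA n; have [t' [Ag Rt]] := H n.+1.
exists (ttail t'); split; first by move=> i Hi; rewrite /ttail Ag.
by apply: (Rt (t' 0)); [rewrite Ag|rewrite tcons_eta].
Qed.

Lemma maxHML_safe (f : form) : maxHML f ->
  forall s t, Safe (sem f s) t -> sem f (fun X => Safe (s X)) t.
Proof.
elim: f => //= [|f1 IH1 f2 IH2|f1 IH1 f2 IH2|A f1 IH|A f1 IH|X f1 IH].
- by move=> _ s t /Safe_empty.
- by move=> /andP[m1 m2] s t /Safe_or[H|H]; [left; apply: IH1|right; apply: IH2].
- move=> /andP[m1 m2] s t H.
  by split; [apply: IH1 => //|apply: IH2 => //]; apply: Safe_mono H => u [].
- move=> m s t /Safe_dia[HA HT]; exists (t 0), (ttail t).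
  by split=> //; split; [apply: IH|rewrite tcons_eta].
- move=> m s t H b t' Hb E; rewrite E in H.
  exact: IH m _ _ (Safe_box H Hb).
- move=> m s t H; exists (Safe (sem (Fmax X f1) s)); split=> // u Hu.
  have Hu' : Safe (sem f1 (upd s X (sem (Fmax X f1) s))) u.
    by apply: Safe_mono Hu => v /max_unfold.
  apply: sem_mono (IH m _ _ Hu') => Y v.
  by rewrite /upd; case: (Y == X).
Qed.

Lemma semL_safe (f : form) : maxHML f -> forall t, Safe (semL f) t -> semL f t.
Proof.
move=> m t /(maxHML_safe m); apply: sem_mono => X u.
by move/Safe_empty.
Qed.

End Safety.

Section Derivatives.
Variable Act : finType.
Local Notation form := (form Act).
Local Notation tset := (tset Act).
Local Notation env := (env Act).

Inductive Pos (P : tset -> Prop) : tset -> Prop :=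
| Pat u : P u -> Pos P u
| Ptop : Pos P (fun _ => True)
| Pbot : Pos P (fun _ => False)
| Por R1 R2 : Pos P R1 -> Pos P R2 -> Pos P (fun t => R1 t \/ R2 t)
| Pand R1 R2 : Pos P R1 -> Pos P R2 -> Pos P (fun t => R1 t /\ R2 t)
| Pext R1 R2 : Pos P R1 -> (forall t, R1 t <-> R2 t) -> Pos P R2.

Definition der (a : Act) (R : tset) : tset := fun t => R (tcons a t).

(* The meanings of all subformula occurrences of f, each one evaluated in
   the environment in which it occurs (binders bind their own meaning). *)
Fixpoint fl (f : form) (s : env) : seq tset :=
  sem f s :: match f with
  | For f1 f2 | Fand f1 f2 => fl f1 s ++ fl f2 s
  | Fdia _ f1 | Fbox _ f1 => fl f1 s
  | Fmin X f1 | Fmax X f1 => fl f1 (upd s X (sem f s))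
  | _ => [::] end.

Lemma fl_head (f : form) s : In (sem f s) (fl f s).
Proof. by case: f; left. Qed.

Variable P : tset -> Prop.

(* If the subformula meanings of f satisfy P and the derivatives of the
   guarded variables (those not in [ung]) are positive combinations over P,
   then so are the derivatives of f: modalities turn into their argument,
   fixpoints are unfolded, and guardedness ensures that unguarded variables
   are never reached before a modality. *)
Lemma der_sem_pos (f : form) s ung : guarded_in ung f ->
  (forall Y a, Y \notin ung -> Pos P (der a (s Y))) ->
  Forall P (fl f s) -> forall a, Pos P (der a (sem f s)).
Proof.
elim: f s ung => /= [||f1 IH1 f2 IH2|f1 IH1 f2 IH2|A f1 _|A f1 _|X f1 IH|X f1 IH|X]
  s ung.
- by move=> *; apply: Pext (Ptop P) _.
- by move=> *; apply: Pext (Pbot P) _.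
- move=> /andP[g1 g2] HY /Forall_cons_iff[_ /Forall_app[HP1 HP2]] a.
  by apply: Pext (Por (IH1 _ _ g1 HY HP1 a) (IH2 _ _ g2 HY HP2 a)) _.
- move=> /andP[g1 g2] HY /Forall_cons_iff[_ /Forall_app[HP1 HP2]] a.
  by apply: Pext (Pand (IH1 _ _ g1 HY HP1 a) (IH2 _ _ g2 HY HP2 a)) _.
- move=> _ _ /Forall_cons_iff[_ /Forall_forall/(_ _ (fl_head _ _)) Hf1] a.
  case Ha: (a \in A).
  + apply: Pext (Pat Hf1) _ => t; split; first by move=> H; exists a, t; rewrite Ha.
    by case=> b [t' [_ [H /tcons_inj[_ ->]]]].
  + apply: Pext (Pbot P) _ => t; split=> // -[b [t' [Hb [_ /tcons_inj[E _]]]]].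
    by rewrite E Hb in Ha.
- move=> _ _ /Forall_cons_iff[_ /Forall_forall/(_ _ (fl_head _ _)) Hf1] a.
  case Ha: (a \in A).
  + apply: Pext (Pat Hf1) _ => t; split; first by move=> H b t' _ /tcons_inj[_ <-].
    by move=> H; apply: (H a t Ha).
  + apply: Pext (Ptop P) _ => t; split=> // _ b t' Hb /tcons_inj[E _].
    by rewrite E Hb in Ha.
- move=> g HY /Forall_cons_iff[_ HP] a.
  apply: Pext (IH _ (X :: ung) g _ HP a) _ => [Y b|t].
    by rewrite in_cons negb_or /upd => /andP[/negbTE -> nU]; apply: HY.
  exact: iff_sym (min_unfold _ _ _ _).
- move=> g HY /Forall_cons_iff[_ HP] a.
  apply: Pext (IH _ (X :: ung) g _ HP a) _ => [Y b|t].
    by rewrite in_cons negb_or /upd => /andP[/negbTE -> nU]; apply: HY.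
  exact: iff_sym (max_unfold _ _ _ _).
- by move=> g HY _ a; apply: HY.
Qed.

Lemma der_fl_pos (f : form) s ung : guarded_in ung f ->
  (forall Y a, Pos P (der a (s Y))) -> Forall P (fl f s) ->
  Forall (fun u => forall a, Pos P (der a u)) (fl f s).
Proof.
elim: f s ung => [||f1 IH1 f2 IH2|f1 IH1 f2 IH2|A f1 IH|A f1 IH|X f1 IH|X f1 IH|X]
  s ung g HY HP; apply: Forall_cons; try exact: der_sem_pos g (fun Y a _ => HY Y a) HP.
- by [].
- by [].
- move: g HP => /= /andP[g1 g2] /Forall_cons_iff[_ /Forall_app[HP1 HP2]].
  by apply/Forall_app; split; [apply: IH1 g1 HY HP1|apply: IH2 g2 HY HP2].
- move: g HP => /= /andP[g1 g2] /Forall_cons_iff[_ /Forall_app[HP1 HP2]].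
  by apply/Forall_app; split; [apply: IH1 g1 HY HP1|apply: IH2 g2 HY HP2].
- exact: IH g HY (Forall_inv_tail HP).
- exact: IH g HY (Forall_inv_tail HP).
- apply: (IH _ _ g _ (Forall_inv_tail HP)) => Y b; rewrite /upd; case: (Y == X) => //.
  exact: der_sem_pos g (fun Y a _ => HY Y a) HP b.
- apply: (IH _ _ g _ (Forall_inv_tail HP)) => Y b; rewrite /upd; case: (Y == X) => //.
  exact: der_sem_pos g (fun Y a _ => HY Y a) HP b.
- by [].
Qed.

End Derivatives.

Lemma fl_der_closed (Act : finType) (phi : form Act) : guarded phi ->
  Forall (fun u => forall a, Pos (fun v => In v (fl phi (@env0 Act))) (der a u))
         (fl phi (@env0 Act)).
Proof.
move=> g; apply: (der_fl_pos g); last exact/Forall_forall.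
by move=> Y a; apply: Pext (Pbot _) _.
Qed.

Definition holds (p : Prop) : bool := if excluded_middle_informative p then true else false.

Lemma holdsP (p : Prop) : reflect p (holds p).
Proof. by rewrite /holds; case: excluded_middle_informative => H; constructor. Qed.

Section Automaton.
Variable Act : finType.
Local Notation form := (form Act).
Local Notation tset := (tset Act).
Local Notation env := (env Act).
Local Notation trace := (trace Act).

Variable U : seq tset.
Local Notation k := (size U).

Definition atom (i : 'I_k) : tset := nth (fun _ => False) U i.

Lemma atom_of_In (u : tset) : In u U -> exists i : 'I_k, atom i = u.
Proof.
move=> Hu.
suff [i [Hi E]] : exists i, i < k /\ nth (fun _ => False) U i = u by exists (Ordinal Hi).
by elim: U Hu => //= v l IH [->|/IH[i [Hi E]]]; [exists 0|exists i.+1].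
Qed.

Definition type_of (t : trace) : {set 'I_k} := [set i | holds (atom i t)].

(* States are sets of types; a state denotes the traces whose type it contains,
   so states denote exactly the Boolean combinations of the atoms. *)
Definition state := {set {set 'I_k}}.
Definition ssem (q : state) : tset := fun t => type_of t \in q.

Lemma Pos_state (R : tset) : Pos (fun u => In u U) R ->
  exists q : state, forall t, R t <-> ssem q t.
Proof.
elim=> [u /atom_of_In[i <-]|||R1 R2 _ [q1 H1] _ [q2 H2]|R1 R2 _ [q1 H1] _ [q2 H2]|
         R1 R2 _ [q H] E].
- by exists [set C : {set 'I_k} | i \in C] => t; rewrite /ssem !inE; exact: rwP (holdsP _).
- by exists setT => t; rewrite /ssem inE.
- by exists set0 => t; rewrite /ssem inE.
- exists (q1 :|: q2) => t; rewrite /ssem inE H1 H2 /ssem.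
  by split=> [[H|H]|/orP[H|H]]; [apply/orP; left|apply/orP; right|left|right].
- exists (q1 :&: q2) => t; rewrite /ssem inE H1 H2 /ssem.
  by split=> [[-> ->]|/andP[]].
- by exists q => t; rewrite -E.
Qed.

Hypothesis HU : Forall (fun u => forall a, Pos (fun v => In v U) (der a u)) U.

Lemma atom_der (i : 'I_k) (a : Act) :
  exists q : state, forall t, atom i (tcons a t) <-> ssem q t.
Proof.
apply: Pos_state; move/Forall_forall: HU; apply; rewrite /atom.
by case: i => i /=; elim: U i => //= v l IH [|i] Hi; [left|right; apply: IH].
Qed.

Definition atom_next (i : 'I_k) (a : Act) : state :=
  proj1_sig (constructive_indefinite_description _ (atom_der i a)).

Lemma atom_nextP (i : 'I_k) a t : atom i (tcons a t) <-> ssem (atom_next i a) t.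
Proof. by rewrite /atom_next; case: constructive_indefinite_description. Qed.

(* The transition function of the deterministic automaton: [next q a]
   denotes the derivative of (the language of) q by a. *)
Definition next (q : state) (a : Act) : state :=
  [set C : {set 'I_k} | [set i | C \in atom_next i a] \in q].

Lemma next_sem q a t : ssem (next q a) t <-> ssem q (tcons a t).
Proof.
rewrite /ssem inE.
suff -> : [set i | type_of t \in atom_next i a] = type_of (tcons a t) by [].
apply/setP => i; rewrite !inE.
by apply/idP/holdsP => [|/atom_nextP]; [move/(atom_nextP i a t)|].
Qed.

Definition nonempty (q : state) : Prop := exists t, ssem q t.

Fixpoint alive (n : nat) (q : state) (t : trace) : Prop :=
  nonempty q /\ (if n is n'.+1 then alive n' (next q (t 0)) (ttail t) else True).

Lemma alive_le n m q t : m <= n -> alive n q t -> alive m q t.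
Proof.
elim: n m q t => [|n IH] [|m] q t //= Hmn [Hq Hn]; split=> //.
exact: IH Hmn Hn.
Qed.

Lemma alive_prefix n q t : alive n q t ->
  exists t', (forall i, i < n -> t' i = t i) /\ ssem q t'.
Proof.
elim: n q t => [|n IH] q t /= [[t' Ht'] Hn]; first by exists t'.
have [t'' [Ag /next_sem Ht'']] := IH _ _ Hn.
by exists (tcons (t 0) t''); split=> // -[|i] Hi //=; rewrite Ag.
Qed.

Lemma alive_safe q t : (forall n, alive n q t) -> Safe (ssem q) t.
Proof. by move=> H n; apply: alive_prefix (H n). Qed.

Definition code (q : state) : nat := enum_rank q.

Lemma code_inj : injective code.
Proof. by move=> q1 q2 /val_inj /enum_rank_inj. Qed.

Definition each_letter (g : Act -> form) : form :=
  foldr (fun a acc => Fand (Fbox [set a] (g a)) acc) Ftt (enum Act).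

Lemma each_letter_sem g s t : sem (each_letter g) s t <-> sem (g (t 0)) s (ttail t).
Proof.
have gen l : sem (foldr (fun a acc => Fand (Fbox [set a] (g a)) acc) Ftt l) s t <->
    (forall a, a \in l -> t 0 = a -> sem (g a) s (ttail t)).
  elim: l => [|b l IH] /=; first by [].
  rewrite IH; split=> [[Hb Hl] a|H].
    rewrite in_cons => /orP[/eqP ->|Ha] E; last exact: Hl.
    by apply: (Hb b); rewrite ?in_set1 // -E tcons_eta.
  split=> [c t'|a Ha]; last by apply: H; rewrite in_cons Ha orbT.
  rewrite in_set1 => /eqP -> E.
  by move: (H b); rewrite in_cons eqxx E => /(_ isT erefl).
by rewrite /each_letter gen; split=> [|H a _ <-//]; apply; rewrite ?mem_enum.
Qed.

Lemma each_letter_pred (p p' : form -> bool) (g : Act -> form) : p Ftt ->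
  (forall A f1 f2, p (Fand (Fbox A f1) f2) = p' f1 && p f2) ->
  (forall a, p' (g a)) -> p (each_letter g).
Proof.
move=> ptt pand pg; rewrite /each_letter.
by elim: (enum Act) => //= a l IH; rewrite pand pg.
Qed.

Definition nonempty_test (q : state) : form := if holds (nonempty q) then Ftt else Fff.

Lemma nonempty_test_sem q s t : sem (nonempty_test q) s t <-> nonempty q.
Proof. by rewrite /nonempty_test; case: holdsP. Qed.

(* Unfolding of the automaton from q: a state met again on the current branch
   becomes its variable, a new one a maximal fixpoint; [fuel] bounds the
   depth, and is always large enough when it is the number of states. *)
Fixpoint build (fuel : nat) (vis : seq state) (q : state) : form :=
  if q \in vis then Fvar (code q) else
  match fuel with
  | 0 => Ftt
  | fuel'.+1 => Fmax (code q) (Fand (nonempty_test q)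
                   (each_letter (fun a => build fuel' (q :: vis) (next q a))))
  end.

Lemma build_complete fuel vis q (s : env) :
  (forall q', q' \in vis -> forall t, ssem q' t -> s (code q') t) ->
  forall t, ssem q t -> sem (build fuel vis q) s t.
Proof.
elim: fuel vis q s => [|fuel IH] vis q s Hvis t Ht /=; case: ifP => Hq //=;
  try exact: Hvis.
exists (ssem q); split=> // u Hu; split; first by apply/nonempty_test_sem; exists u.
apply/each_letter_sem/IH; last by apply/next_sem; rewrite tcons_eta.
move=> q' Hq' v Hv; rewrite /upd; case: eqP => [/code_inj <-//|Hne].
move: Hq'; rewrite in_cons => /orP[/eqP E|]; first by rewrite E in Hne.
by move=> /Hvis; apply.
Qed.

Definition fuel_ok (fuel : nat) (vis : seq state) :=
  uniq vis /\ #|state| <= fuel + size vis.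

(* The maximal fixpoint bound to q is handled by
   an inner induction on the number j <= n of steps. *)
Lemma build_sound n : forall fuel vis q (s : env), fuel_ok fuel vis ->
  (forall q', q' \in vis -> forall t, s (code q') t -> alive n q' t) ->
  forall t, sem (build fuel vis q) s t -> alive n q t.
Proof.
elim/ltn_ind: n => n IHn [|fuel] vis q s [Hu Hc] Hvis t /=; case: ifP => Hq;
  try exact: Hvis.
  have /card_uniqP Hcard : uniq (q :: vis) by rewrite /= Hq Hu.
  have := max_card [pred x in q :: vis]; rewrite Hcard /=.
  by move=> /leq_trans /(_ Hc); rewrite ltnn.
case=> S [HS St].
suff HSj : forall j, j <= n -> forall u, S u -> alive j q u by apply: HSj.
elim=> [|j IHj] Hj u Su; have [/nonempty_test_sem Hne /each_letter_sem Hb] := HS u Su.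
  by split.
split=> //; apply: (IHn j Hj fuel (q :: vis) _ (upd s (code q) S)) Hb.
  by split; [rewrite /= Hq Hu|rewrite /= addnS -addSn].
move=> q' Hq' v; rewrite /upd; case: eqP => [/code_inj -> Sv|Hne' Hv].
  by apply: IHj => //; apply: ltnW.
move: Hq'; rewrite in_cons => /orP[/eqP E|Hq']; first by rewrite E in Hne'.
by apply: alive_le (Hvis q' Hq' v Hv); apply: ltnW.
Qed.

Lemma build_sHML fuel vis q : sHML (build fuel vis q).
Proof.
elim: fuel vis q => [|fuel IH] vis q /=; case: ifP => //= _.
by rewrite /nonempty_test; case: holds; apply: (each_letter_pred (p' := @sHML Act)).
Qed.

Lemma build_guarded fuel vis q : guarded_in [::] (build fuel vis q).
Proof.
elim: fuel vis q => [|fuel IH] vis q /=; case: ifP => //= _.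
by rewrite /nonempty_test; case: holds; apply: (each_letter_pred (p' := guarded_in [::])).
Qed.

Lemma build_closed fuel vis q bnd : (forall q', q' \in vis -> code q' \in bnd) ->
  closed_in bnd (build fuel vis q).
Proof.
elim: fuel vis q bnd => [|fuel IH] vis q bnd Hvis /=; case: ifP => Hq //=; try exact: Hvis.
have Hvis' q' : q' \in q :: vis -> code q' \in code q :: bnd.
  by rewrite !in_cons => /orP[/eqP ->|/Hvis ->]; rewrite ?eqxx ?orbT.
rewrite /nonempty_test; case: holds;
  by apply: (each_letter_pred (p' := closed_in _)) => // a; apply: IH Hvis'.
Qed.

End Automaton.

(* The maxHML half: a guarded maxHML formula is equivalent to the unfolding
   of the automaton of its subformula meanings from the state denoting it. *)
Theorem maxHML_to_sHML (Act : finType) (phi : form Act) :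
  guarded phi -> maxHML phi -> exists psi : form Act,
    [/\ guarded psi, closedF psi, sHML psi & forall t, semL psi t <-> semL phi t].
Proof.
move=> g m; have HU := fl_der_closed g.
set U := fl phi (@env0 Act) in HU *.
have [q0 Hq0] : exists q0 : state U, forall t, semL phi t <-> ssem q0 t.
  by apply/Pos_state/Pat; apply: fl_head.
have fuel_init : @fuel_ok _ U #|state U| [::] by rewrite /fuel_ok addn0.
exists (build HU #|state U| [::] q0); split.
- exact: build_guarded.
- exact: build_closed.
- exact: build_sHML.
move=> t; split=> [Ht|/Hq0]; last exact: build_complete.
apply: (semL_safe m); apply: (Safe_mono (R1 := ssem q0)) => [u /Hq0 //|].
by apply: (@alive_safe _ _ HU) => n; apply: build_sound fuel_init _ _ Ht.
Qed.

Section Duality.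
Variable Act : finType.
Local Notation form := (form Act).
Local Notation tset := (tset Act).
Local Notation env := (env Act).

Definition compl (S : tset) : tset := fun u => ~ S u.

Lemma compl_involutive (S : tset) : compl (compl S) = S.
Proof.
apply: functional_extensionality => u; apply: propositional_extensionality.
by rewrite /compl; split=> [/NNPP|Su /(_ Su)].
Qed.

Section FixpointDuality.
Variables F G : tset -> tset.
Hypothesis dual_FG : forall S u, G S u <-> ~ F (compl S) u.

Lemma gfp_dual t : (exists S, (forall u, S u -> G S u) /\ S t) <->
  ~ (forall S, (forall u, F S u -> S u) -> S t).
Proof.
split=> [[S [HS St]] Hlfp|Hlfp].
  by apply: (Hlfp (compl S)) St => u Fu Su; apply/dual_FG: Fu; apply: HS.
have [S HS] := not_all_ex_not _ _ Hlfp; have [pre nSt] := imply_to_and _ _ HS.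
exists (compl S); split=> // u nSu; apply/dual_FG; rewrite compl_involutive.
by move=> /pre.
Qed.

Lemma lfp_dual t : (forall S, (forall u, G S u -> S u) -> S t) <->
  ~ (exists S, (forall u, S u -> F S u) /\ S t).
Proof.
split=> [Hlfp [S [HS St]]|Hgfp S pre].
  apply: (Hlfp (compl S)) St => u /dual_FG; rewrite compl_involutive.
  by move=> nFu Su; apply/nFu/HS.
apply: NNPP => nSt; apply: Hgfp; exists (compl S); split=> // u nSu.
by apply: NNPP => nFu; apply/nSu/pre/dual_FG.
Qed.

End FixpointDuality.

Fixpoint neg (f : form) : form :=
  match f with
  | Ftt => Fff | Fff => Ftt
  | For f1 f2 => Fand (neg f1) (neg f2)
  | Fand f1 f2 => For (neg f1) (neg f2)
  | Fdia A f1 => Fbox A (neg f1)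
  | Fbox A f1 => Fdia A (neg f1)
  | Fmin X f1 => Fmax X (neg f1)
  | Fmax X f1 => Fmin X (neg f1)
  | Fvar X => Fvar X
  end.

Lemma neg_maxHML f : maxHML (neg f) = minHML f.
Proof. by elim: f => //= f1 -> f2 ->. Qed.

Lemma neg_cHML f : sHML f -> cHML (neg f).
Proof. by elim: f => //= f1 IH1 f2 IH2 /andP[/IH1 -> /IH2 ->]. Qed.

Lemma neg_guarded f ung : guarded_in ung (neg f) = guarded_in ung f.
Proof.
elim: f ung => /= [||f1 IH1 f2 IH2|f1 IH1 f2 IH2|A f1 IH|A f1 IH|X f1 IH|X f1 IH|X] ung;
  by rewrite ?IH1 ?IH2 ?IH.
Qed.

Lemma neg_closed f bnd : closed_in bnd (neg f) = closed_in bnd f.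
Proof.
elim: f bnd => /= [||f1 IH1 f2 IH2|f1 IH1 f2 IH2|A f1 IH|A f1 IH|X f1 IH|X f1 IH|X] bnd;
  by rewrite ?IH1 ?IH2 ?IH.
Qed.

Definition cenv (s : env) : env := fun X => compl (s X).

Lemma cenv_upd (s : env) X S : cenv (upd s X S) = upd (cenv s) X (compl S).
Proof. by apply: functional_extensionality => Y; rewrite /cenv /upd; case: (Y == X). Qed.

Lemma sem_neg f s t : sem (neg f) (cenv s) t <-> ~ sem f s t.
Proof.
elim: f s t => /= [||f1 IH1 f2 IH2|f1 IH1 f2 IH2|A f1 IH|A f1 IH|X f1 IH|X f1 IH|X] s t.
- by [].
- by split=> // _ [].
- by rewrite IH1 IH2; tauto.
- by rewrite IH1 IH2; split=> [|/not_and_or]; tauto.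
- split=> [H [b [t' [Hb [H1 E]]]]|H b t' Hb E].
    exact: (proj1 (IH s t') (H b t' Hb E)).
  by apply/IH => H1; apply: H; exists b, t'.
- split=> [[b [t' [Hb [/IH H1 E]]]] H|H]; first exact/H1/(H b t' Hb E).
  apply: NNPP => nH; apply: H => b t' Hb E; apply: NNPP => nH1.
  by apply: nH; exists b, t'; split=> //; split=> //; apply/IH.
- apply: (gfp_dual (F := fun S => sem f1 (upd s X S))) => S u.
  by rewrite -{1}(compl_involutive S) -cenv_upd IH.
- apply: (lfp_dual (F := fun S => sem f1 (upd s X S))) => S u.
  by rewrite -{1}(compl_involutive S) -cenv_upd IH.
- by [].
Qed.

(* For closed formulae the environment is irrelevant. *)
Lemma semL_neg f : closedF f -> forall t, semL (neg f) t <-> ~ semL f t.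
Proof.
move=> c t; rewrite /semL -sem_neg.
by apply: (sem_closed (bnd := [::])); rewrite // /closedF neg_closed.
Qed.

End Duality.

Theorem mainTheorem15 (Act : finType) (phi : form Act) :
  recHML phi -> closedF phi ->
  (maxHML phi -> exists psi : form Act,
     [/\ recHML psi, closedF psi, sHML psi & forall t, semL psi t <-> semL phi t]) /\
  (minHML phi -> exists psi : form Act,
     [/\ recHML psi, closedF psi, cHML psi & forall t, semL psi t <-> semL phi t]).
Proof.
move=> g c; split; first exact: maxHML_to_sHML.
move=> m.
have [||psi [gp cp sp E]] := @maxHML_to_sHML _ (neg phi).
- by rewrite /guarded neg_guarded.
- by rewrite neg_maxHML.
exists (neg psi); split.
- by rewrite /recHML /guarded neg_guarded.
- by rewrite /closedF neg_closed.
- exact: neg_cHML.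
move=> t; rewrite semL_neg // E semL_neg //.
by split; [apply: NNPP|tauto].
Qed.
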